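(* Let ${\bf p}=({\bf p}_1,\dots,{\bf p}_n)$ and ${\bf q}=({\bf q}_1,\dots,{\bf q}_m)$ be configurations in $\mathbb R^d$. Suppose there are subconfigurations ${\bf p}'\subset{\bf p}$ and ${\bf q}'\subset{\bf q}$ such that the combined set of points of $({\bf p}',{\bf q}')$ is in general position in $\mathbb R^d$ and there is no quadric strictly separating ${\bf p}'$ and ${\bf q}'$. Then $(K(n,m),{\bf p},{\bf q})$ is universally rigid, and the affine span of ${\bf p}$ and the affine span of ${\bf q}$ are each all of $\mathbb R^d$.
   Context: $(K(n,m),{\bf p},{\bf q})$ is the framework with bars joining ${\bf p}_i$ to ${\bf q}_j$ for all $i,j$. It is universally rigid if every configuration in any $\mathbb R^D$ with the same bar lengths has all pairwise distances equal to those of the original. A configuration in $\mathbb R^d$ is in general position if every $k+1$ of its points span a $k$-dimensional affine subspace, for $k=1,\dots,d$. For ${\bf x}\in\mathbb R^d$, $\hat{\bf x}$ is ${\bf x}$ with a $1$ appended. Point sets ${\bf a}$, ${\bf b}$ are strictly separated by a quadric if there is a symmetric $(d+1)\times(d+1)$ matrix $A$ with $\hat{\bf b}^tA\hat{\bf b}<0<\hat{\bf a}^tA\hat{\bf a}$ for all ${\bf a}$ in the first set and ${\bf b}$ in the second. *)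

From HB Require Import structures.
From mathcomp Require Import all_boot all_order all_algebra.
Set Implicit Arguments. Unset Strict Implicit. Unset Printing Implicit Defensive.
Import Order.TTheory GRing.Theory Num.Theory.
Local Open Scope ring_scope.

Definition sqdist (R : rcfType) (d : nat) (x y : 'rV[R]_d) : R :=
  \sum_(i < d) (x 0 i - y 0 i) ^+ 2.

Definition hat (R : rcfType) (d : nat) (x : 'rV[R]_d) : 'rV[R]_(d + 1) :=
  row_mx x (const_mx 1).

Definition join_cfg (R : rcfType) (d n m : nat)
  (p : 'I_n -> 'rV[R]_d) (q : 'I_m -> 'rV[R]_d) : 'I_(n + m) -> 'rV[R]_d :=
  fun k => match split k with inl i => p i | inr j => q j end.

(* dimension of the affine span of the points x_i, i in S
   (= rank of the vectors \hat x_i minus 1) *)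
Definition affdim (R : rcfType) (d N : nat) (x : 'I_N -> 'rV[R]_d)
  (S : {set 'I_N}) : nat :=
  (\rank (\sum_(i in S) <<hat (x i)>>)%MS).-1.

Definition affine_span_full (R : rcfType) (d N : nat) (x : 'I_N -> 'rV[R]_d) : Prop :=
  \rank (\sum_(i < N) <<hat (x i)>>)%MS = d.+1.

Definition general_position (R : rcfType) (d N : nat) (x : 'I_N -> 'rV[R]_d)
  (U : {set 'I_N}) : Prop :=
  forall (k : nat), (1 <= k <= d)%N ->
  forall S : {set 'I_N}, S \subset U -> #|S| = k.+1 -> affdim x S = k.

Definition strictly_separated_by_quadric (R : rcfType) (d n m : nat)
  (a : 'I_n -> 'rV[R]_d) (P : {set 'I_n})
  (b : 'I_m -> 'rV[R]_d) (Q : {set 'I_m}) : Prop :=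
  exists A : 'M[R]_(d + 1), A^T = A /\
    (forall j, j \in Q -> (hat (b j) *m A *m (hat (b j))^T) 0 0 < 0) /\
    (forall i, i \in P -> 0 < (hat (a i) *m A *m (hat (a i))^T) 0 0).

Definition univ_rigid_Knm (R : rcfType) (d n m : nat)
  (p : 'I_n -> 'rV[R]_d) (q : 'I_m -> 'rV[R]_d) : Prop :=
  forall (D : nat) (p2 : 'I_n -> 'rV[R]_D) (q2 : 'I_m -> 'rV[R]_D),
    (forall i j, sqdist (p2 i) (q2 j) = sqdist (p i) (q j)) ->
    forall k l : 'I_(n + m),
      sqdist (join_cfg p2 q2 k) (join_cfg p2 q2 l) = sqdist (join_cfg p q k) (join_cfg p q l).

(* Gordan's alternative turns the absence of a separating quadric into weights
   lam >= 0 on p' and mu >= 0 on q', not all zero, whose moment matrices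
   sum_i lam_i \hat p_i^T \hat p_i and sum_j mu_j \hat q_j^T \hat q_j coincide.
   Comparing the two quadratic forms, a vector orthogonal to the supported \hat q_j
   is orthogonal to the supported \hat p_i and conversely, so both supports span
   the same space.  Each supported \hat p_i therefore depends on the other
   supported points, which general position only allows if that space is all of
   R^(d+1): both supports affinely span R^d and the moment matrix M is invertible.
   The weights w_ij := lam_i mu_j (\hat p_i M^-1 \hat q_j^T) form a stress whose
   energy sum_ij w_ij |x_i - y_j|^2 equals the residual of the weighted
   least-squares affine fit of (x, y) on (\hat p, \hat q).  It vanishes at
   (p, q), hence at every framework with the same bar lengths, which is therefore
   an affine image of (p, q) on the supports.  The linear part is orthogonal
   because the bar lengths between two spanning families are preserved, and the
   affine map extends to all points since a point is determined by its distances
   to an affinely spanning family. *)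

From HB Require Import structures.
From mathcomp Require Import all_boot all_order all_algebra.
From mathcomp Require Import ring lra.
Set Implicit Arguments. Unset Strict Implicit. Unset Printing Implicit Defensive.
Import Order.TTheory GRing.Theory Num.Theory.
Local Open Scope ring_scope.

Lemma sum_pair (A B : finType) (V : nmodType) (F : A * B -> V) :
  \sum_z F z = \sum_a \sum_b F (a, b).
Proof. by rewrite pair_bigA; apply: eq_bigr => -[]. Qed.

Section Gordan.
Variable R : realFieldType.

Lemma exists_between (A B : finType) (PA : pred A) (PB : pred B)
    (al : A -> R) (be : B -> R) :
  (forall a b, PA a -> PB b -> al a < be b) ->
  exists t, (forall a, PA a -> al a < t) /\ (forall b, PB b -> t < be b).
Proof.
move=> H.
pose b0 := \big[Order.min/0]_(b | PB b) be b.
pose L := \big[Order.max/(b0 - 1)]_(a | PA a) al a.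
pose U := \big[Order.min/(L + 1)]_(b | PB b) be b.
have Lb b : PB b -> L < be b.
  move=> Pb; apply: bigmax_lt => [|a Pa]; last exact: H.
  by rewrite ltrBlDr (le_lt_trans (bigmin_le_cond _ _ Pb)) // ltrDl.
have LU : L < U by apply: lt_bigmin => //; rewrite ltrDl.
exists ((L + U) / 2); split.
- move=> a Pa; apply: le_lt_trans (le_bigmax_cond (b0 - 1) _ Pa) _.
  rewrite -/L ltr_pdivlMr //; lra.
- move=> b Pb; apply: lt_le_trans (bigmin_le_cond (L + 1) _ Pb).
  rewrite -/U ltr_pdivrMr //; lra.
Qed.

Definition gordan_primal (I J : finType) (S : pred I) (v : I -> J -> R) :=
  exists x : J -> R, forall k, S k -> 0 < \sum_j v k j * x j.

Definition gordan_dual (I J : finType) (S : pred I) (v : I -> J -> R) :=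
  exists lam : I -> R, [/\ forall k, 0 <= lam k, forall k, ~~ S k -> lam k = 0,
    exists k, lam k != 0 & forall j, \sum_k lam k * v k j = 0].

Section FourierMotzkin.
Variables (N : nat) (I : finType) (S : pred I) (v : I -> 'I_N.+1 -> R).

Let c k := v k ord_max.
Let u k j := v k (lift ord_max j).

(* Fourier-Motzkin elimination of the last coordinate: keep the rows with
   c k = 0 and cancel the last coordinate between every row with c > 0 and every
   row with c < 0. *)
Definition fm_pred (z : I + I * I) : bool :=
  match z with
  | inl k => S k && (c k == 0)
  | inr ab => [&& S ab.1, S ab.2, 0 < c ab.1 & c ab.2 < 0]
  end.

Definition fm_system (z : I + I * I) (j : 'I_N) : R :=
  match z with
  | inl k => u k j
  | inr ab => - c ab.2 * u ab.1 j + c ab.1 * u ab.2 j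
  end.

Lemma sum_lift_max (F : 'I_N.+1 -> R) :
  \sum_j F j = \sum_(j < N) F (lift ord_max j) + F ord_max.
Proof.
rewrite big_ord_recr /=; congr (_ + _); apply: eq_bigr => j _.
by congr F; apply: val_inj; exact: (esym (lift_max j)).
Qed.

Lemma fm_primal_lift : gordan_primal fm_pred fm_system -> gordan_primal S v.
Proof.
move=> [x' Hx'].
pose U k := \sum_j u k j * x' j.
have HAB a b : S a && (0 < c a) -> S b && (c b < 0) -> - U a / c a < U b / - c b.
  move=> /andP[Sa ca] /andP[Sb cb].
  have := Hx' (inr (a, b)); rewrite /= Sa Sb ca cb => /(_ isT).
  under eq_bigr => j _ do rewrite mulrDl -!mulrA.
  rewrite big_split /= -!mulr_sumr -/(U a) -/(U b) => H.
  rewrite ltr_pdivrMr ?oppr_gt0 // mulrAC ltr_pdivlMr //; nra.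
have [t [Ht1 Ht2]] := exists_between HAB.
exists (fun j => if unlift ord_max j is Some j' then x' j' else t) => k Sk.
rewrite sum_lift_max unlift_none.
under eq_bigr => j _ do rewrite liftK.
rewrite -/(u k) -/(U k) -/(c k).
case: (ltgtP (c k) 0) => ck.
- have := Ht2 k; rewrite Sk ck => /(_ isT).
  rewrite ltr_pdivlMr ?oppr_gt0 //; nra.
- have := Ht1 k; rewrite Sk ck => /(_ isT).
  rewrite ltr_pdivrMr //; nra.
- have := Hx' (inl k); rewrite /= Sk ck eqxx => /(_ isT).
  by rewrite mul0r addr0.
Qed.



Section DualLift.
Variable rho : I + I * I -> R.
Hypothesis rho_ge0 : forall z, 0 <= rho z.
Hypothesis rho_supp : forall z, ~~ fm_pred z -> rho z = 0.

Let rhoS z : rho z != 0 -> fm_pred z.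
Proof. by apply: contraR => /rho_supp ->. Qed.

Let rho_ca a b : 0 <= rho (inr (a, b)) * c a.
Proof.
case: (boolP (fm_pred (inr (a, b)))) => [/and4P[_ _ ca _]|/rho_supp ->].
  by rewrite mulr_ge0 // ltW.
by rewrite mul0r.
Qed.

Let rho_cb a b : 0 <= rho (inr (a, b)) * - c b.
Proof.
case: (boolP (fm_pred (inr (a, b)))) => [/and4P[_ _ _ cb]|/rho_supp ->].
  by rewrite mulr_ge0 // oppr_ge0 ltW.
by rewrite mul0r.
Qed.

Definition fm_dual k := rho (inl k) + \sum_b rho (inr (k, b)) * - c b
  + \sum_a rho (inr (a, k)) * c a.

Lemma fm_dual_ge0 k : 0 <= fm_dual k.
Proof. by rewrite !addr_ge0 ?sumr_ge0 // => *; rewrite ?rho_ca ?rho_cb. Qed.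

Lemma fm_dual_supp k : ~~ S k -> fm_dual k = 0.
Proof.
move=> nSk; rewrite /fm_dual rho_supp /=; last by rewrite (negbTE nSk).
rewrite !big1 ?addr0 // => [a _|b _]; rewrite rho_supp ?mul0r //=.
  by rewrite (negbTE nSk) andbF.
by rewrite (negbTE nSk).
Qed.

Lemma fm_dual_neq0 z : rho z != 0 -> exists k, fm_dual k != 0.
Proof.
have rho_gt0 z' : rho z' != 0 -> 0 < rho z' by move=> nz; rewrite lt_def nz rho_ge0.
case: z => [k|[a b]] rz.
  exists k; rewrite lt0r_neq0 // /fm_dual -addrA ltr_wpDr ?rho_gt0 //.
  by rewrite addr_ge0 ?sumr_ge0 // => *; rewrite ?rho_ca ?rho_cb.
exists a; rewrite lt0r_neq0 // /fm_dual -addrA ltr_wpDl ?rho_ge0 //.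
rewrite ltr_wpDr ?sumr_ge0 // (bigD1 b) //= ltr_wpDr ?sumr_ge0 //.
by have /and4P[_ _ _ cb] := rhoS rz; rewrite mulr_gt0 ?oppr_gt0 ?rho_gt0.
Qed.

Lemma fm_dual_eq :
  (forall j, \sum_z rho z * fm_system z j = 0) -> forall j, \sum_k fm_dual k * v k j = 0.
Proof.
move=> rho_eq j; rewrite /fm_dual; under eq_bigr => k _ do rewrite !mulrDl !mulr_suml.
rewrite !big_split /=; case: (unliftP ord_max j) => [j' ->|->].
  have := rho_eq j'; rewrite big_sumType /= sum_pair /=.
  under [X in _ + X = _ -> _]eq_bigr => a _ do
    (under eq_bigr => b _ do rewrite mulrDr !mulrA; rewrite big_split /=).
  by rewrite big_split /= [X in _ + (_ + X)]exchange_big /= addrA.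
rewrite big1 => [|k _]; last first.
  case: (boolP (rho (inl k) == 0)) => [/eqP -> |/rhoS /andP[_ /eqP ck]].
    by rewrite mul0r.
  by rewrite /c in ck; rewrite ck mulr0.
rewrite add0r exchange_big /= -big_split /= big1 // => k _.
by rewrite -big_split big1 //= => b _; rewrite /c; ring.
Qed.

End DualLift.

Lemma fm_dual_lift : gordan_dual fm_pred fm_system -> gordan_dual S v.
Proof.
move=> [rho [rho_ge0 rho_supp [z rz] rho_eq]].
exists (fm_dual rho); split.
- exact: fm_dual_ge0.
- exact: fm_dual_supp.
- exact: fm_dual_neq0 rz.
- exact: fm_dual_eq.
Qed.

End FourierMotzkin.

Lemma gordan_ord N (I : finType) (S : pred I) (v : I -> 'I_N -> R) :
  gordan_primal S v \/ gordan_dual S v.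
Proof.
elim: N I S v => [|N IH] I S v.
  case: (pickP S) => [k Sk|nS]; last by left; exists (fun _ => 0) => k; rewrite nS.
  right; exists (fun i => (i == k)%:R); split.
  - by move=> i; rewrite ler0n.
  - by move=> i; case: eqP => // ->; rewrite Sk.
  - by exists k; rewrite eqxx oner_neq0.
  - by case.
case: (IH _ (fm_pred S v) (fm_system v)) => [/fm_primal_lift|/fm_dual_lift].
  by left.
by right.
Qed.

Theorem gordan (I J : finType) (S : pred I) (v : I -> J -> R) :
  gordan_primal S v \/ gordan_dual S v.
Proof.
have [[x Hx]|[lam [lam_ge0 lam_S lam_neq0 lam_eq]]] :=
  gordan_ord S (fun k (i : 'I_#|J|) => v k (enum_val i)).
  left; exists (fun j => x (enum_rank j)) => k /Hx.
  rewrite (reindex _ (onW_bij _ (enum_val_bij J))).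
  by under eq_bigr => i _ do rewrite enum_valK.
right; exists lam; split => // j.
by have := lam_eq (enum_rank j); under eq_bigr => k _ do rewrite enum_rankK.
Qed.

End Gordan.

Section Euclid.
Variable R : rcfType.
Implicit Types (k l : nat).

Definition vdot k (u v : 'rV[R]_k) : R := \tr (u^T *m v).

Lemma vdotE k (u v : 'rV[R]_k) : vdot u v = \sum_i u 0 i * v 0 i.
Proof. by apply: eq_bigr => i _; rewrite mxE big_ord1 mxE. Qed.

Lemma mxE_vdot k (u v : 'rV[R]_k) : (u *m v^T) 0 0 = vdot u v.
Proof. by rewrite vdotE mxE; apply: eq_bigr => i _; rewrite mxE. Qed.

Lemma vdotC k (u v : 'rV[R]_k) : vdot u v = vdot v u.
Proof. by rewrite /vdot -mxtrace_tr trmx_mul trmxK. Qed.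

Lemma vdotDl k (u1 u2 v : 'rV[R]_k) : vdot (u1 + u2) v = vdot u1 v + vdot u2 v.
Proof. by rewrite /vdot linearD /= mulmxDl mxtraceD. Qed.

Lemma vdotBl k (u1 u2 v : 'rV[R]_k) : vdot (u1 - u2) v = vdot u1 v - vdot u2 v.
Proof. by rewrite /vdot linearB /= mulmxBl linearB. Qed.

Lemma vdotDr k (u v1 v2 : 'rV[R]_k) : vdot u (v1 + v2) = vdot u v1 + vdot u v2.
Proof. by rewrite vdotC vdotDl !(vdotC u). Qed.

Lemma vdotBr k (u v1 v2 : 'rV[R]_k) : vdot u (v1 - v2) = vdot u v1 - vdot u v2.
Proof. by rewrite vdotC vdotBl !(vdotC u). Qed.

Lemma vdot0l k (v : 'rV[R]_k) : vdot 0 v = 0.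
Proof. by rewrite /vdot trmx0 mul0mx linear0. Qed.

Lemma vdotZr k c (u v : 'rV[R]_k) : vdot u (c *: v) = c * vdot u v.
Proof. by rewrite /vdot -scalemxAr linearZ. Qed.

Lemma vdot_mulmxr k l (u : 'rV[R]_k) (v : 'rV[R]_l) (A : 'M[R]_(l, k)) :
  vdot u (v *m A) = \tr (A *m u^T *m v).
Proof. by rewrite /vdot mulmxA mxtrace_mulC mulmxA. Qed.

Lemma vdot_mulmxl k l (u : 'rV[R]_k) (v : 'rV[R]_l) (A : 'M[R]_(k, l)) :
  vdot (u *m A) v = vdot u (v *m A^T).
Proof. by rewrite /vdot trmx_mul -mulmxA [LHS]mxtrace_mulC mulmxA. Qed.

Lemma vdot_ge0 k (u : 'rV[R]_k) : 0 <= vdot u u.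
Proof. by rewrite vdotE sumr_ge0 // => i _; rewrite -expr2 sqr_ge0. Qed.

Lemma vdot_eq0 k (u : 'rV[R]_k) : vdot u u = 0 -> u = 0.
Proof.
rewrite vdotE => /psumr_eq0P H; apply/rowP => i; rewrite mxE.
by apply/eqP; rewrite -sqrf_eq0 expr2 H // => j _; rewrite -expr2 sqr_ge0.
Qed.

Lemma sqdistE k (x y : 'rV[R]_k) : sqdist x y = vdot (x - y) (x - y).
Proof. by rewrite /sqdist vdotE; apply: eq_bigr => i _; rewrite !mxE expr2. Qed.

Lemma sqdist_ge0 k (x y : 'rV[R]_k) : 0 <= sqdist x y.
Proof. by rewrite sqdistE vdot_ge0. Qed.

Lemma sqdist_expand k (x y : 'rV[R]_k) :
  sqdist x y = vdot x x - 2 * vdot x y + vdot y y.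
Proof. by rewrite sqdistE vdotBl !vdotBr (vdotC y x); ring. Qed.

Lemma sqdistC k (x y : 'rV[R]_k) : sqdist x y = sqdist y x.
Proof. by rewrite !sqdist_expand (vdotC x y); ring. Qed.

End Euclid.

Section Moment.
Variables (R : rcfType) (k : nat).

Definition moment (I : finType) (lam : I -> R) (v : I -> 'rV[R]_k) : 'M[R]_k :=
  \sum_i lam i *: ((v i)^T *m v i).

Definition spanmx (I : finType) (S : pred I) (v : I -> 'rV[R]_k) :=
  (\sum_(i | S i) <<v i>>)%MS.

Definition supp (I : finType) (lam : I -> R) : pred I := fun i => 0 < lam i.

Lemma moment_tr (I : finType) (lam : I -> R) v : (moment lam v)^T = moment lam v.
Proof.
rewrite linear_sum; apply: eq_bigr => i _.
by rewrite linearZ /= trmx_mul trmxK.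
Qed.

Lemma moment_entry (I : finType) (lam : I -> R) (v : I -> 'rV[R]_k) r s :
  moment lam v r s = \sum_i lam i * (v i 0 r * v i 0 s).
Proof. by rewrite summxE; apply: eq_bigr => i _; rewrite !mxE big_ord1 !mxE. Qed.

Lemma sum_vdot_moment (I : finType) (lam : I -> R) v l (A : 'M[R]_(k, l)) :
  \sum_i lam i * vdot (v i *m A) (v i *m A) = \tr (A^T *m moment lam v *m A).
Proof.
rewrite mulmx_sumr mulmx_suml linear_sum; apply: eq_bigr => i _.
by rewrite /vdot trmx_mul -scalemxAr -scalemxAl linearZ /= !mulmxA.
Qed.

Lemma sum_vdot_mixed (I : finType) (lam : I -> R) v l (z : I -> 'rV[R]_l)
    (A : 'M[R]_(k, l)) :
  \sum_i lam i * vdot (z i) (v i *m A) =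
  \tr (A *m \sum_i lam i *: ((z i)^T *m v i)).
Proof.
rewrite mulmx_sumr linear_sum; apply: eq_bigr => i _.
by rewrite vdot_mulmxr -scalemxAr linearZ /= mulmxA.
Qed.

Lemma row_full_annihilator (I : finType) (S : pred I) v l (A : 'M[R]_(k, l)) :
  row_full (spanmx S v) -> (forall i, S i -> v i *m A = 0) -> A = 0.
Proof.
move=> full vA; have sub : (spanmx S v <= kermx A)%MS.
  by apply/sumsmx_subP => i Si; rewrite genmxE; apply/sub_kermxP/vA.
have /sub_kermxP : (1%:M <= kermx A)%MS by rewrite (submx_trans _ sub) ?sub1mx.
by rewrite mul1mx.
Qed.

Lemma weighted_vdot_eq0 (I : finType) (lam : I -> R) l (w : I -> 'rV[R]_l) :
  (forall i, 0 <= lam i) -> \sum_i lam i * vdot (w i) (w i) = 0 ->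
  forall i, 0 < lam i -> w i = 0.
Proof.
move=> lam_ge0 /psumr_eq0P H i lam_i; apply: vdot_eq0.
have /eqP := H (fun j _ => mulr_ge0 (lam_ge0 j) (vdot_ge0 _)) i isT.
by rewrite mulf_eq0 gt_eqF // => /eqP.
Qed.

Lemma weighted_sqdist_eq0 (I : finType) (lam : I -> R) l (u v : I -> 'rV[R]_l) :
  (forall i, 0 <= lam i) -> \sum_i lam i * sqdist (u i) (v i) = 0 ->
  forall i, 0 < lam i -> u i = v i.
Proof.
move=> lam_ge0 H i lam_i; apply/eqP; rewrite -subr_eq0; apply/eqP.
apply: (weighted_vdot_eq0 (w := fun i => u i - v i) lam_ge0 _ lam_i).
by rewrite -[RHS]H; apply: eq_bigr => i' _; rewrite sqdistE.
Qed.

Lemma moment_span_sub (I J : finType) (lam : I -> R) (mu : J -> R) v u :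
  (forall i, 0 <= lam i) -> (forall j, 0 <= mu j) -> moment lam v = moment mu u ->
  (spanmx (supp lam) v <= spanmx (supp mu) u)%MS.
Proof.
move=> lam_ge0 mu_ge0 Mvu; set V := spanmx _ u.
have u_ker j : 0 < mu j -> u j *m cokermx V = 0.
  by move=> mu_j; apply/eqP; rewrite -submxE (sumsmx_sup j) ?genmxE.
have : \sum_i lam i * vdot (v i *m cokermx V) (v i *m cokermx V) = 0.
  rewrite sum_vdot_moment Mvu -sum_vdot_moment big1 // => j _.
  have [mu_j|] := ltP 0 (mu j); first by rewrite u_ker // vdot0l mulr0.
  by rewrite le_eqVlt ltNge mu_ge0 orbF => /eqP ->; rewrite mul0r.
move/(weighted_vdot_eq0 lam_ge0) => v_ker.
by apply/sumsmx_subP => i lam_i; rewrite genmxE submxE v_ker.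
Qed.

Lemma moment_unit (I : finType) (lam : I -> R) v :
  (forall i, 0 <= lam i) -> row_full (spanmx (supp lam) v) ->
  moment lam v \in unitmx.
Proof.
move=> lam_ge0 full; rewrite -row_free_unit; apply/inj_row_free => w wM.
have : \sum_i lam i * vdot (v i *m w^T) (v i *m w^T) = 0.
  by rewrite sum_vdot_moment trmxK wM mul0mx linear0.
move/(weighted_vdot_eq0 lam_ge0)/(row_full_annihilator full)/eqP.
by rewrite trmx_eq0 => /eqP.
Qed.

End Moment.

Section Hat.
Variables (R : rcfType) (d : nat).

Lemma hat_mul_col_mx l (z : 'rV[R]_d) (A : 'M[R]_(d, l)) (b : 'rV[R]_l) :
  hat z *m col_mx A b = z *m A + b.
Proof.
rewrite /hat mul_row_col; congr (_ + _).
by rewrite -[RHS]mul1mx; congr (_ *m _); apply/rowP => i; rewrite !ord1 !mxE.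
Qed.

Lemma hat_mulmx l (z : 'rV[R]_d) (K : 'M[R]_(d + 1, l)) :
  hat z *m K = z *m usubmx K + dsubmx K.
Proof. by rewrite -{1}(vsubmxK K) hat_mul_col_mx. Qed.

Lemma hat_neq0 (z : 'rV[R]_d) : hat z != 0.
Proof.
apply/eqP => /rowP/(_ (rshift d 0)); rewrite /hat row_mxEr !mxE => /eqP.
by rewrite oner_eq0.
Qed.

End Hat.

Section Energy.
Variables (R : rcfType) (d : nat) (I J : finType).
Variables (p : I -> 'rV[R]_d) (q : J -> 'rV[R]_d) (lam : I -> R) (mu : J -> R).
Let hp i := hat (p i).
Let hq j := hat (q j).
Let M := moment lam hp.
Hypothesis balanced : M = moment mu hq.
Hypothesis M_unit : M \in unitmx.

Definition stress i j := lam i * mu j * (hp i *m invmx M *m (hq j)^T) 0 0.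

Let e : 'cV[R]_(d + 1) := col_mx 0 1.

Let hat_e (z : 'rV[R]_d) : hat z *m e = 1.
Proof. by rewrite hat_mul_col_mx mulmx0 add0r. Qed.

Lemma stress_row_sum i : \sum_j stress i j = lam i.
Proof.
have -> : \sum_j stress i j = lam i * (hp i *m invmx M *m \sum_j mu j *: (hq j)^T) 0 0.
  rewrite mulmx_sumr summxE mulr_sumr; apply: eq_bigr => j _.
  by rewrite -scalemxAr mxE mulrA.
have -> : \sum_j mu j *: (hq j)^T = M *m e.
  rewrite balanced mulmx_suml; apply: eq_bigr => j _.
  by rewrite -scalemxAl -mulmxA hat_e mulmx1.
by rewrite mulmxA -(mulmxA (hp i)) mulVmx // mulmx1 hat_e mxE mulr1.
Qed.

Lemma stress_col_sum j : \sum_i stress i j = mu j.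
Proof.
have -> : \sum_i stress i j = mu j * ((\sum_i lam i *: hp i) *m invmx M *m (hq j)^T) 0 0.
  rewrite !mulmx_suml summxE mulr_sumr; apply: eq_bigr => i _.
  by rewrite -!scalemxAl mxE /stress; ring.
have -> : \sum_i lam i *: hp i = e^T *m M.
  rewrite mulmx_sumr; apply: eq_bigr => i _.
  by rewrite -scalemxAr mulmxA -trmx_mul hat_e trmx1 mul1mx.
by rewrite -(mulmxA _ M) mulmxV // mulmx1 -trmx_mul hat_e trmx1 mxE mulr1.
Qed.

Section Fit.
Variables (D : nat) (x : I -> 'rV[R]_D) (y : J -> 'rV[R]_D).

Let X := \sum_i lam i *: ((x i)^T *m hp i).
Let Y := \sum_j mu j *: ((y j)^T *m hq j).

Definition lsq_fit : 'M[R]_(d + 1, D) := invmx M *m Y^T.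

Lemma fit_residualE :
  \sum_i lam i * sqdist (x i) (hp i *m lsq_fit) +
  \sum_j mu j * sqdist (y j) (hq j *m lsq_fit)
  = \sum_i lam i * vdot (x i) (x i) + \sum_j mu j * vdot (y j) (y j)
    - 2 * \tr (lsq_fit *m X).
Proof.
have sum3 (K : finType) (a s t w : K -> R) :
    \sum_k a k * (s k - 2 * t k + w k) =
    \sum_k a k * s k - 2 * \sum_k a k * t k + \sum_k a k * w k.
  by rewrite mulr_sumr -sumrB -big_split /=; apply: eq_bigr => k _; ring.
under eq_bigr => i _ do rewrite sqdist_expand.
under [X in _ + X = _]eq_bigr => j _ do rewrite sqdist_expand.
rewrite !sum3 !sum_vdot_moment !sum_vdot_mixed -/X -/Y -balanced.
have -> : \tr (lsq_fit^T *m M *m lsq_fit) = \tr (lsq_fit *m Y).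
  rewrite /lsq_fit trmx_mul trmxK trmx_inv moment_tr -/M.
  by rewrite -(mulmxA _ (invmx M)) mulVmx // mulmx1 mxtrace_mulC.
ring.
Qed.

Lemma fit_crossE :
  \tr (lsq_fit *m X) = \sum_i \sum_j stress i j * vdot (x i) (y j).
Proof.
rewrite /lsq_fit /Y /X mulmx_sumr linear_sum /=; apply: eq_bigr => i _.
rewrite [(\sum_j _)^T]linear_sum /= mulmx_sumr mulmx_suml linear_sum /=.
apply: eq_bigr => j _.
rewrite [(mu j *: _)^T]linearZ /= trmx_mul trmxK -!scalemxAr -!scalemxAl !linearZ /=.
rewrite !mulmxA mxtrace_mulC !mulmxA -(mulmxA (hp i *m invmx M *m (hq j)^T)).
rewrite [hp i *m _ *m _]mx11_scalar mul_scalar_mx linearZ /= mxtrace_mulC.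
by rewrite /stress /vdot; ring.
Qed.

Lemma stress_energyE :
  \sum_i \sum_j stress i j * sqdist (x i) (y j)
  = \sum_i lam i * vdot (x i) (x i) + \sum_j mu j * vdot (y j) (y j)
    - 2 * \sum_i \sum_j stress i j * vdot (x i) (y j).
Proof.
have Ex : \sum_i lam i * vdot (x i) (x i) = \sum_i \sum_j stress i j * vdot (x i) (x i).
  by apply: eq_bigr => i _; rewrite -stress_row_sum mulr_suml.
have Ey : \sum_j mu j * vdot (y j) (y j) = \sum_i \sum_j stress i j * vdot (y j) (y j).
  by rewrite [RHS]exchange_big; apply: eq_bigr => j _; rewrite -stress_col_sum mulr_suml.
rewrite Ex Ey mulr_sumr -big_split -sumrB /=; apply: eq_bigr => i _.
rewrite mulr_sumr -big_split -sumrB /=; apply: eq_bigr => j _.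
by rewrite sqdist_expand; ring.
Qed.

Lemma fit_energy :
  \sum_i lam i * sqdist (x i) (hp i *m lsq_fit) +
  \sum_j mu j * sqdist (y j) (hq j *m lsq_fit)
  = \sum_i \sum_j stress i j * sqdist (x i) (y j).
Proof. by rewrite fit_residualE fit_crossE stress_energyE. Qed.

End Fit.

Hypothesis lam_ge0 : forall i, 0 <= lam i.
Hypothesis mu_ge0 : forall j, 0 <= mu j.

Lemma stress_energy_eq0 : \sum_i \sum_j stress i j * sqdist (p i) (q j) = 0.
Proof.
pose E : 'M[R]_(d + 1, d) := col_mx 1%:M 0.
have hatE (z : 'rV[R]_d) : hat z *m E = z by rewrite hat_mul_col_mx mulmx1 addr0.
have fitE : lsq_fit q = E.
  rewrite /lsq_fit linear_sum /=.
  have -> : \sum_j (mu j *: ((q j)^T *m hq j))^T = M *m E.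
    rewrite balanced mulmx_suml; apply: eq_bigr => j _.
    by rewrite linearZ /= trmx_mul trmxK -scalemxAl -mulmxA hatE.
  by rewrite mulmxA mulVmx // mul1mx.
rewrite -fit_energy fitE !big1 ?addr0 // => i _;
  by rewrite hatE sqdistE subrr vdot0l mulr0.
Qed.

Lemma equivalent_affine_on_support D (x : I -> 'rV[R]_D) (y : J -> 'rV[R]_D) :
  (forall i j, sqdist (x i) (y j) = sqdist (p i) (q j)) ->
  exists K : 'M[R]_(d + 1, D),
    (forall i, 0 < lam i -> x i = hat (p i) *m K) /\
    (forall j, 0 < mu j -> y j = hat (q j) *m K).
Proof.
move=> same_dist; exists (lsq_fit y).
have := fit_energy x y.
under [RHS]eq_bigr => i _ do under eq_bigr => j _ do rewrite same_dist.
rewrite stress_energy_eq0 => /eqP; rewrite paddr_eq0 => [/andP[/eqP Ex /eqP Ey]||].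
- by split; [exact: weighted_sqdist_eq0 lam_ge0 Ex | exact: weighted_sqdist_eq0 mu_ge0 Ey].
- by rewrite sumr_ge0 // => i _; rewrite mulr_ge0 ?sqdist_ge0.
- by rewrite sumr_ge0 // => j _; rewrite mulr_ge0 ?sqdist_ge0.
Qed.

End Energy.

Section Isometry.
Variables (R : rcfType) (d : nat).

Lemma col_mx_eq0P k l (A : 'M[R]_(k, l)) (B : 'M[R]_(1, l)) :
  col_mx A B = 0 -> A = 0 /\ B = 0.
Proof. by move/eqP; rewrite col_mx_eq0 => /andP[/eqP -> /eqP ->]. Qed.

Section Spanning.
Variables (I : finType) (S : pred I) (a : I -> 'rV[R]_d).
Hypothesis full : row_full (spanmx S (fun i => hat (a i))).

Lemma spanning_affine_eq0 l (A : 'M[R]_(d, l)) (b : 'rV[R]_l) :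
  (forall i, S i -> a i *m A + b = 0) -> A = 0 /\ b = 0.
Proof.
move=> H; apply: col_mx_eq0P; apply: (row_full_annihilator full) => i Si.
by rewrite hat_mul_col_mx H.
Qed.

Lemma spanning_scalar_eq0 (w : 'rV[R]_d) (c : R) :
  (forall i, S i -> vdot (a i) w + c = 0) -> w = 0 /\ c = 0.
Proof.
move=> H; have [wT0 c0] : w^T = 0 /\ c%:M = 0 :> 'M_1.
  apply: spanning_affine_eq0 => i Si; apply/rowP => j.
  by rewrite ord1 mxE mxE_vdot !mxE eqxx mulr1n H.
split; first by apply/eqP; rewrite -trmx_eq0 wT0.
by move/matrixP: c0 => /(_ 0 0); rewrite !mxE eqxx mulr1n.
Qed.

Lemma spanning_sqdist_shift (w z : 'rV[R]_d) (c : R) :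
  (forall i, S i -> sqdist w (a i) + c = sqdist z (a i)) -> w = z /\ c = 0.
Proof.
move=> H.
have [wz c0] : 2 *: (z - w) = 0 /\ vdot w w - vdot z z + c = 0.
  apply: spanning_scalar_eq0 => i Si; move: (H i Si).
  by rewrite !sqdist_expand vdotZr vdotBr !(vdotC (a i)); lra.
have {}wz : w = z.
  by apply/esym/eqP; rewrite -subr_eq0; move/eqP: wz; rewrite scaler_eq0 pnatr_eq0.
by split=> //; move: c0; rewrite wz addrC subrr addr0.
Qed.

Lemma sym_form_differences_ker (J : finType) (T : pred J) (b : J -> 'rV[R]_d)
    (C : 'M[R]_d) :
  C^T = C ->
  (forall i j, S i -> T j -> vdot ((a i - b j) *m C) (a i - b j) = 0) ->
  forall j1 j2, T j1 -> T j2 -> (b j1 - b j2) *m C = 0.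
Proof.
move=> CT H j1 j2 T1 T2.
have [/eqP + _] : 2 *: ((b j1 - b j2) *m C) = 0 /\
    vdot (b j2 *m C) (b j2) - vdot (b j1 *m C) (b j1) = 0.
  apply: spanning_scalar_eq0 => i Si; move: (H i j1 Si T1) (H i j2 Si T2).
  rewrite !mulmxBl !vdotBl !vdotBr !(vdot_mulmxl (a i)) CT.
  by rewrite !(vdotC (b _ *m C)) vdotZr vdotBr; lra.
by rewrite scaler_eq0 pnatr_eq0 => /eqP.
Qed.

End Spanning.

Lemma vdot_mulmx_orth l (L : 'M[R]_(d, l)) (v : 'rV[R]_d) (r : 'rV[R]_l) :
  L *m L^T = 1%:M -> r *m L^T = 0 ->
  vdot (v *m L + r) (v *m L + r) = vdot v v + vdot r r.
Proof.
move=> LL rL; have vL_r : vdot (v *m L) r = 0.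
  by rewrite vdotC vdot_mulmxr -[L]trmxK -trmx_mul rL trmx0 !mul0mx linear0.
rewrite vdotDl !vdotDr vL_r (vdotC r) vL_r vdot_mulmxr trmx_mul !mulmxA LL mul1mx.
by rewrite addr0 add0r.
Qed.

Lemma sym_form_eq0 (I J : finType) (S : pred I) (T : pred J)
    (a : I -> 'rV[R]_d) (b : J -> 'rV[R]_d) (C : 'M[R]_d) :
  C^T = C -> row_full (spanmx S (fun i => hat (a i))) ->
  row_full (spanmx T (fun j => hat (b j))) -> (exists j0, T j0) ->
  (forall i j, S i -> T j -> vdot ((a i - b j) *m C) (a i - b j) = 0) -> C = 0.
Proof.
move=> CT fullS fullT [j0 Tj0] H.
have ker := sym_form_differences_ker fullS CT H.
suff [] : C = 0 /\ - (b j0 *m C) = 0 by [].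
apply: (spanning_affine_eq0 fullT) => j Tj.
by rewrite -mulmxBl ker.
Qed.

Lemma isometry_extension (I : finType) (S : pred I) (a : I -> 'rV[R]_d) l
    (L : 'M[R]_(d, l)) (t : 'rV[R]_l) (a' : I -> 'rV[R]_l) (z : 'rV[R]_d)
    (z' : 'rV[R]_l) :
  L *m L^T = 1%:M -> row_full (spanmx S (fun i => hat (a i))) ->
  (forall i, S i -> a' i = a i *m L + t) ->
  (forall i, S i -> sqdist z' (a' i) = sqdist z (a i)) -> z' = z *m L + t.
Proof.
move=> LL full Ha Hd.
(* z' - t = w L + r with r orthogonal to the rows of L *)
pose w := (z' - t) *m L^T; pose r := z' - t - w *m L.
have rL : r *m L^T = 0 by rewrite mulmxBl -mulmxA LL mulmx1 subrr.
have [wz /vdot_eq0 r0] : w = z /\ vdot r r = 0.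
  apply: (spanning_sqdist_shift full) => i Si; rewrite -Hd // !sqdistE.
  have -> : z' - a' i = (w - a i) *m L + r.
    by rewrite Ha // mulmxBl [RHS]addrC -!addrA addKr opprD (addrC (- _)).
  by rewrite vdot_mulmx_orth.
by move/eqP: r0; rewrite /r -wz subr_eq0 subr_eq => /eqP.
Qed.

Lemma sqdist_affine l (L : 'M[R]_(d, l)) (t : 'rV[R]_l) (x y : 'rV[R]_d) :
  sqdist (x *m L + t) (y *m L + t) = vdot ((x - y) *m L) ((x - y) *m L).
Proof. by rewrite sqdistE mulmxBl opprD addrACA subrr addr0. Qed.

Lemma sqdist_isometry l (L : 'M[R]_(d, l)) (t : 'rV[R]_l) (x y : 'rV[R]_d) :
  L *m L^T = 1%:M -> sqdist (x *m L + t) (y *m L + t) = sqdist x y.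
Proof.
move=> LL; rewrite sqdist_affine sqdistE -[(x - y) *m L]addr0.
by rewrite vdot_mulmx_orth ?mul0mx // vdot0l addr0.
Qed.

End Isometry.

Section UniversalRigidity.
Variables (R : rcfType) (d n m : nat).
Variables (p : 'I_n -> 'rV[R]_d) (q : 'I_m -> 'rV[R]_d) (lam : 'I_n -> R) (mu : 'I_m -> R).
Hypothesis lam_ge0 : forall i, 0 <= lam i.
Hypothesis mu_ge0 : forall j, 0 <= mu j.
Hypothesis balanced :
  moment lam (fun i => hat (p i)) = moment mu (fun j => hat (q j)).
Hypothesis fullP : row_full (spanmx (supp lam) (fun i => hat (p i))).
Hypothesis fullQ : row_full (spanmx (supp mu) (fun j => hat (q j))).
Hypothesis supp_mu : exists j, 0 < mu j.

Lemma balanced_univ_rigid : univ_rigid_Knm p q.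
Proof.
move=> D p' q' same_dist.
have [K [Kp Kq]] := equivalent_affine_on_support balanced (moment_unit lam_ge0 fullP)
  lam_ge0 mu_ge0 same_dist.
set L := usubmx K; set t := dsubmx K.
have Lp i : 0 < lam i -> p' i = p i *m L + t by move/Kp ->; rewrite hat_mulmx.
have Lq j : 0 < mu j -> q' j = q j *m L + t by move/Kq ->; rewrite hat_mulmx.
have LL : L *m L^T = 1%:M.
  apply/eqP; rewrite -subr_eq0; apply/eqP.
  apply: (sym_form_eq0 _ fullP fullQ supp_mu) => [|i j lam_i mu_j].
    by rewrite linearB /= trmx_mul trmxK trmx1.
  rewrite mulmxBr mulmx1 mulmxA vdotBl vdot_mulmxl trmxK -(sqdist_affine _ t).
  by rewrite -Lp // -Lq // same_dist sqdistE subrr.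
have Lq_all j : q' j = q j *m L + t.
  apply: (isometry_extension LL fullP Lp) => i lam_i.
  by rewrite sqdistC same_dist sqdistC.
have Lp_all i : p' i = p i *m L + t.
  by apply: (isometry_extension LL fullQ (fun j _ => Lq_all j)) => j mu_j; rewrite same_dist.
have Lpq k : join_cfg p' q' k = join_cfg p q k *m L + t.
  by rewrite /join_cfg; case: (split k).
by move=> k k'; rewrite !Lpq sqdist_isometry.
Qed.
End UniversalRigidity.

Lemma rank_sumsmx_le_card (F : fieldType) (I : finType) k (S : {set I})
    (v : I -> 'rV[F]_k) :
  (\rank (\sum_(i in S) <<v i>>)%MS <= #|S|)%N.
Proof.
rewrite -sum1_card; elim/big_rec2: _ => [|i r A _ IH]; first by rewrite mxrank0.
apply: leq_trans (mxrank_adds_leqif _ _) _; apply: leq_add => //.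
by rewrite genmxE rank_leq_row.
Qed.

Section GeneralPosition.
Variables (R : rcfType) (d N : nat) (x : 'I_N -> 'rV[R]_d) (U : {set 'I_N}).
Hypothesis gp : general_position x U.

Lemma gp_rank (S : {set 'I_N}) :
  S \subset U -> (0 < #|S| <= d.+1)%N -> \rank (\sum_(s in S) <<hat (x s)>>)%MS = #|S|.
Proof.
move=> SU /andP[S_gt0 S_le]; have cardS := esym (prednK S_gt0).
case k_eq: #|S|.-1 => [|k] in cardS *.
  have /eqP/cards1P[s ->] := cardS.
  by rewrite big_set1 genmxE rank_rV hat_neq0 cards1.
have kd : (1 <= k.+1 <= d)%N by move: S_le; rewrite cardS ltnS.
have := gp kd SU cardS.
by rewrite /affdim cardS; case: (\rank _) => [|r /= ->].
Qed.

Lemma gp_row_full (S : {set 'I_N}) :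
  S \subset U -> (d.+1 <= #|S|)%N -> row_full (\sum_(s in S) <<hat (x s)>>)%MS.
Proof.
move=> SU /card_geqP[s [s_uniq s_size sS]].
pose S' := [set t in s].
have S'S : S' \subset S by apply/subsetP => t; rewrite inE => /sS.
have cardS' : #|S'| = d.+1 by rewrite cardsE (card_uniqP s_uniq) s_size.
have := gp_rank (subset_trans S'S SU); rewrite cardS' ltnSn => /(_ isT) rankS'.
have : (\rank (\sum_(s in S') <<hat (x s)>>) <= \rank (\sum_(s in S) <<hat (x s)>>))%N.
  by apply/mxrankS/sumsmx_subP => t tS'; rewrite (sumsmx_sup t) // (subsetP S'S).
by rewrite rankS' -addn1 /row_full eqn_leq rank_leq_col => ->.
Qed.

End GeneralPosition.

Section JoinCfg.
Variables (R : rcfType) (d n m : nat) (p : 'I_n -> 'rV[R]_d) (q : 'I_m -> 'rV[R]_d).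

Lemma join_cfg_lshift i : join_cfg p q (lshift m i) = p i.
Proof. by rewrite /join_cfg -[lshift m i]/(unsplit (inl i)) unsplitK. Qed.

Lemma join_cfg_rshift j : join_cfg p q (rshift n j) = q j.
Proof. by rewrite /join_cfg -[rshift n j]/(unsplit (inr j)) unsplitK. Qed.

End JoinCfg.

Section BalancedSupport.
Variables (R : rcfType) (d n m : nat).
Variables (p : 'I_n -> 'rV[R]_d) (q : 'I_m -> 'rV[R]_d) (lam : 'I_n -> R) (mu : 'I_m -> R).
Variables (P : {set 'I_n}) (Q : {set 'I_m}).
Hypothesis lam_ge0 : forall i, 0 <= lam i.
Hypothesis mu_ge0 : forall j, 0 <= mu j.
Hypothesis balanced :
  moment lam (fun i => hat (p i)) = moment mu (fun j => hat (q j)).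
Hypothesis lamP : forall i, 0 < lam i -> i \in P.
Hypothesis muQ : forall j, 0 < mu j -> j \in Q.
Hypothesis supp_lam : exists i, 0 < lam i.
Hypothesis gp : general_position (join_cfg p q)
  ([set lshift m i | i in P] :|: [set rshift n j | j in Q]).

Let x := join_cfg p q.
Let Vp := spanmx (supp lam) (fun i => hat (p i)).
Let Vq := spanmx (supp mu) (fun j => hat (q j)).
Let T := [set lshift m i | i in supp lam] :|: [set rshift n j | j in supp mu].
Let VT := (\sum_(s in T) <<hat (x s)>>)%MS.

Let Vp_sub : (Vp <= Vq)%MS. Proof. exact: moment_span_sub. Qed.
Let Vq_sub : (Vq <= Vp)%MS. Proof. exact: moment_span_sub. Qed.

Let VT_sub (V : 'M[R]_(d + 1)) : (Vp <= V)%MS -> (Vq <= V)%MS -> (VT <= V)%MS.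
Proof.
move=> VpV VqV; apply/sumsmx_subP => s /setUP[]/imsetP[k supp_k ->].
  by rewrite /x join_cfg_lshift genmxE (submx_trans _ VpV) // (sumsmx_sup k supp_k) ?genmxE.
by rewrite /x join_cfg_rshift genmxE (submx_trans _ VqV) // (sumsmx_sup k supp_k) ?genmxE.
Qed.

Lemma balanced_support_full : row_full Vp /\ row_full Vq.
Proof.
have [i0 lam_i0] := supp_lam; pose s0 := lshift m i0.
have s0T : s0 \in T by rewrite inE; apply/orP; left; apply: imset_f.
have TU : T \subset [set lshift m i | i in P] :|: [set rshift n j | j in Q].
  by apply: setUSS; apply: imsetS; apply/subsetP => k; [move/lamP | move/muQ].
have VT_dep : (VT <= \sum_(s in T :\ s0) <<hat (x s)>>)%MS.
  have Vq_sub' : (Vq <= \sum_(s in T :\ s0) <<hat (x s)>>)%MS.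
    apply/sumsmx_subP => j mu_j.
    rewrite (sumsmx_sup (rshift n j)) ?genmxE /x ?join_cfg_rshift //.
    by rewrite !inE eq_rlshift /=; apply/orP; right; apply: imset_f.
  exact: VT_sub (submx_trans Vp_sub Vq_sub') Vq_sub'.
(* hat p_i0 depends on the other supported points, which general position
   forbids for at most d + 1 points *)
have T_large : (d.+1 < #|T|)%N.
  rewrite ltnNge; apply/negP => T_le.
  have := leq_trans (mxrankS VT_dep) (rank_sumsmx_le_card _ _).
  rewrite (gp_rank gp) // ?T_le ?andbT; last by apply/card_gt0P; exists s0.
  by rewrite [X in (X <= _)%N](cardsD1 s0) s0T ltnn.
have := gp_row_full gp TU (ltnW T_large); rewrite -/x -/VT -sub1mx => fullT.
by split; rewrite -sub1mx (submx_trans fullT) // VT_sub.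
Qed.

End BalancedSupport.

Section Quadric.
Variables (R : rcfType) (k : nat).

Lemma quadratic_form_pairs (u : 'rV[R]_k) (A : 'M[R]_k) :
  (u *m A *m u^T) 0 0 = \sum_(rs : 'I_k * 'I_k) u 0 rs.1 * u 0 rs.2 * A rs.1 rs.2.
Proof.
rewrite sum_pair /= mxE exchange_big /=; apply: eq_bigr => r _.
by rewrite mxE mulr_suml; apply: eq_bigr => s _; rewrite !mxE; ring.
Qed.

Lemma quadratic_form_symmetrize (u : 'rV[R]_k) (A : 'M[R]_k) :
  (u *m (A + A^T) *m u^T) 0 0 = 2 * (u *m A *m u^T) 0 0.
Proof.
rewrite mulmxDr mulmxDl [LHS]mxE !mxE_vdot [vdot (u *m A^T) u]vdot_mulmxl trmxK.
by rewrite vdotC mulr2n mulrDl mul1r.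
Qed.

End Quadric.

Section NotSeparated.
Variables (R : rcfType) (d n m : nat).
Variables (p : 'I_n -> 'rV[R]_d) (q : 'I_m -> 'rV[R]_d) (P : {set 'I_n}) (Q : {set 'I_m}).

Lemma not_separated_balanced : ~ strictly_separated_by_quadric p P q Q ->
  exists (lam : 'I_n -> R) (mu : 'I_m -> R),
  [/\ (forall i, 0 <= lam i) /\ (forall j, 0 <= mu j),
      (forall i, 0 < lam i -> i \in P) /\ (forall j, 0 < mu j -> j \in Q),
      (exists i, lam i != 0) \/ (exists j, mu j != 0) &
      moment lam (fun i => hat (p i)) = moment mu (fun j => hat (q j))].
Proof.
move=> not_sep.
(* Gordan's alternative in the entries of a matrix A, for the linear forms
   A |-> \hat p_i A \hat p_i^T (i in P) and A |-> - \hat q_j A \hat q_j^T (j in Q) *)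
pose S (z : 'I_n + 'I_m) := match z with inl i => i \in P | inr j => j \in Q end.
pose w (u : 'rV[R]_(d + 1)) (rs : 'I_(d + 1) * 'I_(d + 1)) := u 0 rs.1 * u 0 rs.2.
pose v z rs := match z with inl i => w (hat (p i)) rs | inr j => - w (hat (q j)) rs end.
case: (gordan S v) => [[x Hx]|[lam [lam_ge0 lam_S [z lam_z] lam_eq]]].
  case: not_sep; pose A : 'M[R]_(d + 1) := \matrix_(r, s) x (r, s).
  have qA u : (u *m A *m u^T) 0 0 = \sum_rs w u rs * x rs.
    by rewrite quadratic_form_pairs; apply: eq_bigr => -[r s] _; rewrite mxE.
  exists (A + A^T); split; first by rewrite linearD /= trmxK addrC.
  split=> [j Qj|i Pi]; rewrite quadratic_form_symmetrize qA.
    rewrite pmulr_rlt0 // -oppr_gt0 -sumrN; have := Hx (inr j) Qj.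
    by under eq_bigr do rewrite mulNr.
  by rewrite mulr_gt0 //; apply: Hx (inl i) Pi.
exists (fun i => lam (inl i)), (fun j => lam (inr j)); split.
- by split=> ?; apply: lam_ge0.
- have lamS z' : 0 < lam z' -> S z'.
    by apply: contraTT => /lam_S ->; rewrite ltxx.
  by split=> [i /(lamS (inl i))|j /(lamS (inr j))].
- by case: z lam_z => [i|j] nz; [left; exists i | right; exists j].
apply/matrixP => r s; rewrite !moment_entry; apply/eqP; rewrite -subr_eq0; apply/eqP.
have := lam_eq (r, s); rewrite big_sumType /=.
by under [X in _ + X]eq_bigr => j _ do rewrite mulrN; rewrite sumrN.
Qed.

End NotSeparated.

Lemma row_full_affine_span_full (R : rcfType) d N (S : pred 'I_N) (x : 'I_N -> 'rV[R]_d) :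
  row_full (spanmx S (fun i => hat (x i))) -> affine_span_full x.
Proof.
rewrite -sub1mx => full; apply/eqP; rewrite -[X in _ == X]addn1 -/(row_full _) -sub1mx.
by apply: submx_trans full _; apply/sumsmx_subP => i _; rewrite (sumsmx_sup i).
Qed.

Lemma balanced_mass (R : rcfType) d (I J : finType) (p : I -> 'rV[R]_d)
    (q : J -> 'rV[R]_d) lam mu :
  moment lam (fun i => hat (p i)) = moment mu (fun j => hat (q j)) ->
  \sum_i lam i = \sum_j mu j.
Proof.
have hat_last (z : 'rV[R]_d) : hat z 0 (rshift d 0) = 1 by rewrite /hat row_mxEr mxE.
move/matrixP/(_ (rshift d 0) (rshift d 0)); rewrite !moment_entry.
rewrite (eq_bigr lam) => [|i _]; last by rewrite !hat_last !mulr1.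
by rewrite (eq_bigr mu) => // j _; rewrite !hat_last !mulr1.
Qed.

Lemma psumr_neq0P (R : numDomainType) (I : finType) (a : I -> R) :
  (forall i, 0 <= a i) -> reflect (exists i, 0 < a i) (\sum_i a i != 0).
Proof.
move=> a_ge0; rewrite psumr_neq0 //; apply: (iffP hasP) => [[i _ /andP[_ ?]]|[i ?]].
  by exists i.
by exists i; rewrite ?mem_index_enum.
Qed.

Lemma balanced_supports (R : rcfType) d (I J : finType) (p : I -> 'rV[R]_d)
    (q : J -> 'rV[R]_d) lam mu :
  (forall i, 0 <= lam i) -> (forall j, 0 <= mu j) ->
  moment lam (fun i => hat (p i)) = moment mu (fun j => hat (q j)) ->
  (exists i, lam i != 0) \/ (exists j, mu j != 0) ->
  (exists i, 0 < lam i) /\ (exists j, 0 < mu j).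
Proof.
move=> lam_ge0 mu_ge0 /balanced_mass mass nz.
suff supp_lam : exists i, 0 < lam i.
  by split=> //; apply/(psumr_neq0P mu_ge0); rewrite -mass; apply/(psumr_neq0P lam_ge0).
case: nz => [[i nz]|[j nz]]; first by exists i; rewrite lt_def nz lam_ge0.
apply/(psumr_neq0P lam_ge0); rewrite mass; apply/(psumr_neq0P mu_ge0).
by exists j; rewrite lt_def nz mu_ge0.
Qed.

Theorem mainTheorem5 (R : rcfType) (d n m : nat)
  (p : 'I_n -> 'rV[R]_d) (q : 'I_m -> 'rV[R]_d)
  (P : {set 'I_n}) (Q : {set 'I_m}) :
  general_position (join_cfg p q)
    ([set lshift m i | i in P] :|: [set rshift n j | j in Q]) ->
  ~ strictly_separated_by_quadric p P q Q ->
  univ_rigid_Knm p q /\ affine_span_full p /\ affine_span_full q.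
Proof.
move=> gp /not_separated_balanced[lam [mu [[lam_ge0 mu_ge0] [lamP muQ] nz balanced]]].
have [supp_lam supp_mu] := balanced_supports lam_ge0 mu_ge0 balanced nz.
have [fullP fullQ] := balanced_support_full lam_ge0 mu_ge0 balanced lamP muQ supp_lam gp.
split; first exact: balanced_univ_rigid balanced fullP fullQ supp_mu.
by split; apply: row_full_affine_span_full; [exact: fullP | exact: fullQ].
Qed.
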